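(* Let $m\ge 1$. In the checker game on $2m+1$ positions, each of the configurations $O(wb)^m$ and $(wb)^mO$ can be transformed into the configuration $w^mOb^m$ by a sequence of exactly $\frac{m(m+1)}{2}$ legal moves.
   Context: Positions $1,\dots,2m+1$ in a row; a configuration is a word over $\{b,w,O\}$ with exactly one $O$, where $b$ denotes a black checker, $w$ a white checker and $O$ the vacancy; $(wb)^m$ denotes $wb$ repeated $m$ times. A legal move is either a slide (a checker adjacent to the vacancy moves into it) or a jump (a checker at distance two from the vacancy jumps over the checker between them into the vacancy). *)

From HB Require Import structures.
From mathcomp Require Import all_boot.
Set Implicit Arguments. Unset Strict Implicit. Unset Printing Implicit Defensive.

Inductive cell := B | W | O.

Definition cell_eqb (x y : cell) : bool :=
  match x, y with B, B | W, W | O, O => true | _, _ => false end.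
Lemma cell_eqP : Equality.axiom cell_eqb.
Proof. by case; case; constructor. Qed.
HB.instance Definition _ := hasDecEq.Build cell cell_eqP.

Definition config := seq cell.
Definition valid_config (c : config) : bool := count_mem O c == 1.

(* Move the checker at (0-based) position j into the vacancy at position i. *)
Definition move_to (c : config) (i j : nat) : config :=
  set_nth O (set_nth O c i (nth O c j)) j O.

Definition slide_or_jump (c : config) (i j : nat) : bool :=
  [|| j == i.+1, i == j.+1,
      (j == i.+2) && (nth O c i.+1 != O)
    | (i == j.+2) && (nth O c j.+1 != O)].

Definition legal_move (c c' : config) : Prop :=
  valid_config c /\
  exists i j : nat,
    [/\ (i < size c) && (j < size c), nth O c i = O, nth O c j != O,
        slide_or_jump c i j
      & c' = move_to c i j].

Fixpoint moves (k : nat) (c c' : config) : Prop :=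
  match k with
  | 0 => c = c'
  | k.+1 => exists c1, legal_move c c1 /\ moves k c1 c'
  end.

Definition wb_pow (m : nat) : config := flatten (nseq m [:: W; B]).

(* From O(wb)^(m+1), slide the first w left into the
   vacancy; the vacancy now sits before b(wb)^m, and m jumps (each w jumping
   leftwards over a b) carry it to the end, giving w (wb)^m O b.  Inside the
   frame w ... b the second claim for m finishes, so the count obeys
   T(m+1) = 1 + m + T(m), i.e. T(m) = m(m+1)/2.  The other starting
   configuration is the mirror image: slide the last b right, jump the
   vacancy to the front, and apply the first claim inside the frame. *)

From mathcomp Require Import all_boot.
From mathcomp Require Import zify.

Lemma moves_add {a b c1 c2 c3} :
  moves a c1 c2 -> moves b c2 c3 -> moves (a + b) c1 c3.
Proof.
elim: a c1 => [|a IH] c1 /=; first by move=> ->.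
by move=> [c [Hc Hmoves]] H23; exists c; split => //; apply: IH Hmoves H23.
Qed.

Lemma moves1 {c c'} : legal_move c c' -> moves 1 c c'.
Proof. by move=> H; exists c'. Qed.

Section Frame.

Variables p s : config.
Hypotheses (p_free : count_mem O p = 0) (s_free : count_mem O s = 0).

Lemma nth_frame c i : i < size c -> nth O (p ++ c ++ s) (size p + i) = nth O c i.
Proof. by move=> Hi; rewrite nth_cat ltnNge leq_addr /= addKn nth_cat Hi. Qed.

Lemma set_nth_frame c i y : i < size c ->
  set_nth O (p ++ c ++ s) (size p + i) y = p ++ set_nth O c i y ++ s.
Proof.
move=> Hi; elim: p => [|x q IH] /=; last by rewrite IH.
by elim: c i Hi => // x c IH [|i] //= Hi; rewrite IH.
Qed.

Lemma move_to_frame c i j : i < size c -> j < size c ->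
  move_to (p ++ c ++ s) (size p + i) (size p + j) = p ++ move_to c i j ++ s.
Proof.
move=> Hi Hj; rewrite /move_to nth_frame // set_nth_frame // set_nth_frame //.
by rewrite size_set_nth (leq_trans Hj) ?leq_maxr.
Qed.

Lemma slide_or_jump_frame c i j : i < size c -> j < size c ->
  slide_or_jump (p ++ c ++ s) (size p + i) (size p + j) = slide_or_jump c i j.
Proof.
move=> Hi Hj; rewrite /slide_or_jump -!addnS !eqn_add2l.
have mid k l : l == k.+2 -> l < size c ->
    nth O (p ++ c ++ s) (size p + k.+1) = nth O c k.+1.
  by move=> /eqP -> Hl; rewrite nth_frame // (ltnW Hl).
by case: (boolP (j == i.+2)) => [/mid -> //|_]; case: (boolP (i == j.+2)) => [/mid -> //|].
Qed.

Lemma legal_move_frame c c' :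
  legal_move c c' -> legal_move (p ++ c ++ s) (p ++ c' ++ s).
Proof.
move=> [Hv [i [j [/andP [Hi Hj] Hci Hcj Hsj ->]]]]; split.
  by move: Hv; rewrite /valid_config !count_cat p_free s_free addn0.
exists (size p + i), (size p + j); split.
- by rewrite !size_cat !ltn_add2l !(leq_trans _ (leq_addr _ _)).
- by rewrite nth_frame.
- by rewrite nth_frame.
- by rewrite slide_or_jump_frame.
- by rewrite move_to_frame.
Qed.

Lemma moves_frame k c c' : moves k c c' -> moves k (p ++ c ++ s) (p ++ c' ++ s).
Proof.
elim: k c => [|k IH] c /=; first by move=> ->.
by move=> [c1 [Hc1 Hmoves]]; exists (p ++ c1 ++ s); split; [apply: legal_move_frame | apply: IH].
Qed.

End Frame.

Arguments moves_frame p s p_free s_free {k c c'}.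

Lemma count_wb_pow n : count_mem O (wb_pow n) = 0.
Proof. by elim: n. Qed.

Lemma moves_frame_WB {k c c'} :
  moves k c c' -> moves k (W :: c ++ [:: B]) (W :: c' ++ [:: B]).
Proof. exact: (moves_frame [:: W] [:: B]). Qed.

Lemma slide_right x : x != O -> legal_move [:: O; x] [:: x; O].
Proof. by case: x => // _; split => //; exists 0, 1. Qed.

Lemma slide_left x : x != O -> legal_move [:: x; O] [:: O; x].
Proof. by case: x => // _; split => //; exists 1, 0. Qed.

Lemma jump_right x y : x != O -> y != O -> legal_move [:: O; y; x] [:: x; y; O].
Proof. by case: x => // _; case: y => // _; split => //; exists 0, 2. Qed.

Lemma jump_left x y : x != O -> y != O -> legal_move [:: x; y; O] [:: O; y; x].
Proof. by case: x => // _; case: y => // _; split => //; exists 2, 0. Qed.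

Lemma wb_pow_rcons n : wb_pow n.+1 = wb_pow n ++ [:: W; B].
Proof. by elim: n => //= n IH; rewrite -IH. Qed.

Lemma moves_vacancy_right n : moves n (O :: B :: wb_pow n) (wb_pow n ++ [:: O; B]).
Proof.
elim: n => [|n IH] //.
have first_jump := moves_frame [::] (B :: wb_pow n) erefl (count_wb_pow n)
  (moves1 (jump_right W B erefl erefl)).
have rest := moves_frame [:: W; B] [::] erefl erefl IH.
by rewrite /= !cats0 in rest; exact: (moves_add first_jump rest).
Qed.

Lemma moves_vacancy_left n : moves n (wb_pow n ++ [:: W; O]) (W :: O :: wb_pow n).
Proof.
elim: n => [|n IH] //.
have prefix_free : count_mem O (wb_pow n ++ [:: W]) = 0.
  by rewrite count_cat count_wb_pow.
have first_jump := moves_frame _ [::] prefix_free erefl (moves1 (jump_left B W erefl erefl)).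
have rest := moves_frame [::] [:: W; B] erefl erefl IH.
rewrite !cats0 -!catA in first_jump; rewrite -!catA in rest; rewrite !wb_pow_rcons -!catA.
exact: (moves_add first_jump rest).
Qed.

Lemma triangular_succ m : (m.+1 * m.+2) %/ 2 = 1 + m + (m * m.+1) %/ 2.
Proof.
have -> : m.+1 * m.+2 = m * m.+1 + 2 * m.+1 by lia.
by rewrite divnDr ?dvdn_mulr // mulKn // addnC add1n.
Qed.

Lemma frame_sorted m :
  W :: (nseq m W ++ O :: nseq m B) ++ [:: B] = nseq m.+1 W ++ O :: nseq m.+1 B.
Proof. by rewrite -catA /=; congr (_ :: _ ++ _ :: _); elim: m => //= m ->. Qed.

Lemma sort_wb_pow m :
  moves ((m * m.+1) %/ 2) (O :: wb_pow m) (nseq m W ++ O :: nseq m B) /\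
  moves ((m * m.+1) %/ 2) (wb_pow m ++ [:: O]) (nseq m W ++ O :: nseq m B).
Proof.
elim: m => [|m [IHfront IHback]] //; rewrite triangular_succ -frame_sorted; split.
- have slide := moves_frame [::] (B :: wb_pow m) erefl (count_wb_pow m)
    (moves1 (slide_right W erefl)).
  have jumps := moves_frame [:: W] [::] erefl erefl (moves_vacancy_right m).
  have sorting := moves_frame_WB IHback.
  rewrite !cats0 in jumps; rewrite -catA in sorting.
  exact: (moves_add (moves_add slide jumps) sorting).
- have prefix_free : count_mem O (wb_pow m ++ [:: W]) = 0.
    by rewrite count_cat count_wb_pow.
  have slide := moves_frame _ [::] prefix_free erefl (moves1 (slide_left B erefl)).
  have jumps := moves_frame [::] [:: B] erefl erefl (moves_vacancy_left m).
  have sorting := moves_frame_WB IHfront.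
  rewrite !cats0 -!catA in slide; rewrite -catA in jumps; rewrite wb_pow_rcons -catA.
  exact: (moves_add (moves_add slide jumps) sorting).
Qed.

Theorem lemma3 (m : nat) : 1 <= m ->
  moves ((m * m.+1) %/ 2) (O :: wb_pow m) (nseq m W ++ O :: nseq m B) /\
  moves ((m * m.+1) %/ 2) (wb_pow m ++ [:: O]) (nseq m W ++ O :: nseq m B).
Proof. by move=> _; apply: sort_wb_pow. Qed.
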